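(* Let $\kappa=4$ and let $Q=U\operatorname{diag}(0,\lambda_2,\lambda_3,\lambda_4)U^{-1}$ be a GTR rate matrix with stationary distribution $\boldsymbol\pi$, eigenvalues $0>\lambda_2\ge\lambda_3\ge\lambda_4$ and $U$ as in the context. (A) If $\boldsymbol\pi=(1/4,1/4,1/4,1/4)$ and $U=\begin{pmatrix}1&c&b&1\\1&-c&-b&1\\1&-b&c&-1\\1&b&-c&-1\end{pmatrix}$ with $b,c\ge0$, $b^2+c^2=2$, then $\lambda_4>\lambda_2+\lambda_3$ if $bc\neq0$, and $\lambda_4>2\lambda_2$ if $bc=0$. (B) If $\boldsymbol\pi=(1/8,1/8,1/4,1/2)$ and $U=\begin{pmatrix}1&2&\sqrt2&1\\1&-2&\sqrt2&1\\1&0&-\sqrt2&1\\1&0&0&-1\end{pmatrix}$, then $\lambda_4>2\lambda_2$.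
   Context: A GTR rate matrix $Q$ for stationary distribution $\boldsymbol\pi$ (positive entries summing to $1$) is a $4\times4$ real matrix with strictly positive off-diagonal entries, zero row sums, and $\operatorname{diag}(\boldsymbol\pi)Q$ symmetric. $U$ is real with $UU^T=\operatorname{diag}(\boldsymbol\pi)^{-1}$ and first column $\mathbf 1$, and $Q=U\operatorname{diag}(0,\lambda_2,\lambda_3,\lambda_4)U^{-1}$. *)

From HB Require Import structures.
From mathcomp Require Import all_boot all_order all_algebra.
Set Implicit Arguments. Unset Strict Implicit. Unset Printing Implicit Defensive.
Import Order.TTheory GRing.Theory Num.Theory.
Local Open Scope ring_scope.

Definition mx4 {R : ringType} (a : seq (seq R)) : 'M[R]_4 :=
  \matrix_(i < 4, j < 4) nth 0 (nth [::] a i) j.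

Definition rv4 {R : ringType} (a : seq R) : 'rV[R]_4 :=
  \row_(j < 4) nth 0 a j.

Definition is_distribution {R : numDomainType} (pi : 'rV[R]_4) : Prop :=
  (forall i, 0 < pi 0 i) /\ \sum_(i < 4) pi 0 i = 1.

Definition is_GTR {R : numDomainType} (pi : 'rV[R]_4) (Q : 'M[R]_4) : Prop :=
  [/\ forall i j : 'I_4, i != j -> 0 < Q i j,
      forall i : 'I_4, \sum_(j < 4) Q i j = 0 &
      (diag_mx pi *m Q)^T = diag_mx pi *m Q].

Definition is_eigen_decomp {R : fieldType} (pi : 'rV[R]_4) (Q U : 'M[R]_4)
    (l2 l3 l4 : R) : Prop :=
  [/\ U *m U^T = invmx (diag_mx pi),
      forall i : 'I_4, U i 0 = 1 &
      Q = U *m diag_mx (rv4 [:: 0; l2; l3; l4]) *m invmx U].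

From HB Require Import structures.
From mathcomp Require Import all_boot all_order all_algebra.
From mathcomp Require Import ring lra.
Set Implicit Arguments. Unset Strict Implicit. Unset Printing Implicit Defensive.
Import Order.TTheory GRing.Theory Num.Theory.
Local Open Scope ring_scope.

(* Since U U^T = diag(pi)^-1, the inverse of U is U^T diag(pi), so the spectral
   decomposition Q = U diag(d) U^-1 gives, entrywise,
       Q i j = pi_j * sum_k U i k * d_k * U j k.
   As pi_j > 0 and Q i j > 0 for i <> j, the "eigen-pairing"
   sum_k U i k * d_k * U j k of any two distinct rows of U is positive.
   With d = (0, l2, l3, l4) this is a linear inequality in the eigenvalues
   whose coefficients are products of entries of U.  For the explicit U of
   part (A), the pairings of rows 0,1 and of rows 2,3 give
       c^2 l2 + b^2 l3 < l4   and   b^2 l2 + c^2 l3 < l4,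
   whose sum together with b^2 + c^2 = 2 yields l2 + l3 < l4, and which
   specialise to 2 l2 < l4 when b = 0 or c = 0.  For part (B) the pairing of
   rows 0,1 gives 4 l2 - 2 l3 < l4, and 2 l2 <= 4 l2 - 2 l3 since l3 <= l2. *)

Lemma invmx_right_inverse (F : fieldType) (n : nat) (A B : 'M[F]_n) :
  A *m B = 1%:M -> invmx A = B.
Proof.
move=> AB1; have [uA _] := mulmx1_unit AB1.
by rewrite -[RHS](mulKmx uA) AB1 mulmx1.
Qed.

Lemma diag_mx_unit (F : fieldType) (n : nat) (p : 'rV[F]_n) :
  (forall i, p 0 i != 0) -> diag_mx p \in unitmx.
Proof.
by move=> p_neq0; rewrite unitmxE det_diag unitfE; apply/prodf_neq0.
Qed.

Lemma invmx_weighted_orthogonal (F : fieldType) (n : nat) (p : 'rV[F]_n)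
    (U : 'M[F]_n) :
  (forall i, p 0 i != 0) -> U *m U^T = invmx (diag_mx p) ->
  invmx U = U^T *m diag_mx p.
Proof.
move=> p_neq0 UUt; apply: invmx_right_inverse.
by rewrite mulmxA UUt mulVmx // diag_mx_unit.
Qed.

Definition eigen_pairing (R : comNzRingType) (n : nat) (U : 'M[R]_n)
    (d : 'rV[R]_n) (i j : 'I_n) : R :=
  \sum_k U i k * d 0 k * U j k.

Lemma spectral_entry (R : comNzRingType) (n : nat) (U : 'M[R]_n)
    (d p : 'rV[R]_n) (i j : 'I_n) :
  (U *m diag_mx d *m (U^T *m diag_mx p)) i j = p 0 j * eigen_pairing U d i j.
Proof.
rewrite /eigen_pairing mulmxA mul_mx_diag !mxE mulrC !mulr_sumr.
by apply: eq_bigr => k _; rewrite mul_mx_diag !mxE.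
Qed.

Lemma GTR_eigen_pairing_pos (R : numFieldType) (pi : 'rV[R]_4)
    (Q U : 'M[R]_4) (l2 l3 l4 : R) :
  is_distribution pi -> is_GTR pi Q -> is_eigen_decomp pi Q U l2 l3 l4 ->
  forall i j, i != j -> 0 < eigen_pairing U (rv4 [:: 0; l2; l3; l4]) i j.
Proof.
move=> [pi_gt0 _] [Qoff_gt0 _ _] [UUt _ QE] i j ij.
have invU : invmx U = U^T *m diag_mx pi.
  by apply: invmx_weighted_orthogonal => // k; rewrite gt_eqF.
have := Qoff_gt0 i j ij.
by rewrite QE invU spectral_entry pmulr_rgt0.
Qed.

Lemma eigenvalue_bound_A (R : realFieldType) (U : 'M[R]_4) (b c l2 l3 l4 : R) :
  (forall i j, i != j -> 0 < eigen_pairing U (rv4 [:: 0; l2; l3; l4]) i j) ->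
  U = mx4 [:: [:: 1; c; b; 1];
              [:: 1; -c; -b; 1];
              [:: 1; -b; c; -1];
              [:: 1; b; -c; -1]] ->
  b ^+ 2 + c ^+ 2 = 2 ->
  (b * c != 0 -> l4 > l2 + l3) /\ (b * c = 0 -> l4 > 2 * l2).
Proof.
move=> pairing_gt0 UE bc2.
have H01 : c ^+ 2 * l2 + b ^+ 2 * l3 < l4.
  move: (pairing_gt0 0 1 isT).
  by rewrite /eigen_pairing UE !big_ord_recl big_ord0 !mxE /=; lra.
have H23 : b ^+ 2 * l2 + c ^+ 2 * l3 < l4.
  move: (pairing_gt0 2 3 isT).
  by rewrite /eigen_pairing UE !big_ord_recl big_ord0 !mxE /=; lra.
split=> [_|/eqP].
  have : (b ^+ 2 + c ^+ 2) * (l2 + l3) < 2 * l4 by lra.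
  by rewrite bc2; lra.
rewrite mulf_eq0 => /orP[] /eqP z; rewrite z expr0n /= in bc2 H01 H23.
  by rewrite add0r in bc2; rewrite bc2 in H01; lra.
by rewrite addr0 in bc2; rewrite bc2 in H23; lra.
Qed.

Lemma eigenvalue_bound_B (R : rcfType) (U : 'M[R]_4) (l2 l3 l4 : R) :
  (forall i j, i != j -> 0 < eigen_pairing U (rv4 [:: 0; l2; l3; l4]) i j) ->
  l2 >= l3 ->
  U = mx4 [:: [:: 1; 2; Num.sqrt 2; 1];
              [:: 1; -2; Num.sqrt 2; 1];
              [:: 1; 0; - Num.sqrt 2; 1];
              [:: 1; 0; 0; -1]] ->
  l4 > 2 * l2.
Proof.
move=> pairing_gt0 l32 UE.
have := pairing_gt0 0 1 isT.
rewrite /eigen_pairing UE !big_ord_recl big_ord0 !mxE /=.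
rewrite (mulrAC (Num.sqrt 2) l3) -expr2 sqr_sqrtr ?ler0n //.
lra.
Qed.

Theorem lemma3 (R : rcfType) (pi : 'rV[R]_4) (Q U : 'M[R]_4) (l2 l3 l4 : R) :
  is_distribution pi ->
  is_GTR pi Q ->
  is_eigen_decomp pi Q U l2 l3 l4 ->
  0 > l2 -> l2 >= l3 -> l3 >= l4 ->
  (* (A) *)
  (forall b c : R,
     pi = rv4 [:: 1/4; 1/4; 1/4; 1/4] ->
     U = mx4 [:: [:: 1; c; b; 1];
                 [:: 1; -c; -b; 1];
                 [:: 1; -b; c; -1];
                 [:: 1; b; -c; -1]] ->
     0 <= b -> 0 <= c -> b ^+ 2 + c ^+ 2 = 2 ->
     (b * c != 0 -> l4 > l2 + l3) /\ (b * c = 0 -> l4 > 2 * l2)) /\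
  (* (B) *)
  (pi = rv4 [:: 1/8; 1/8; 1/4; 1/2] ->
   U = mx4 [:: [:: 1; 2; Num.sqrt 2; 1];
               [:: 1; -2; Num.sqrt 2; 1];
               [:: 1; 0; - Num.sqrt 2; 1];
               [:: 1; 0; 0; -1]] ->
   l4 > 2 * l2).
Proof.
move=> distr gtr decomp _ l32 _.
have pairing_gt0 := GTR_eigen_pairing_pos distr gtr decomp.
split=> [b c _ UE _ _ bc2 | _ UE].
  exact: (eigenvalue_bound_A pairing_gt0 UE bc2).
exact: (eigenvalue_bound_B pairing_gt0 l32 UE).
Qed.
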